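(* Let $G$ be a finite simple graph with vertex set $[n]$ and let $\lambda>0$. Then $\mathrm{PRSforIS}_f(G,\lambda)$ terminates with probability $1$, for any choice function $f$. On termination, $\mathbf X$ is the indicator vector of an independent set $I$ of $G$, distributed according to the Gibbs (hard-core) distribution $\Pr(I)=\lambda^{|I|}/\sum_{J}\lambda^{|J|}$, where $J$ ranges over all independent sets of $G$, including $\emptyset$.
   Context: Variables $\mathbf X=(X_v:v\in[n])$ take values in $\{0,1\}$; $\mathbf X$ encodes the vertex set $\{v:X_v=1\}$. Under the product distribution, each $X_v$ is independently $1$ with probability $\lambda/(1+\lambda)$. For $S\subseteq[n]$, $\partial S=\{v\notin S:\ v\text{ is adjacent to some }u\in S\}$ and $\overline S=S\cup\partial S$. Let $\mathcal C$ be the family of sets $S\subseteq[n]$ with $|S|\ge2$ such that the induced subgraph $G[S]$ is connected. A set $S\in\mathcal C$ is a cluster (for the current $\mathbf X$) if $X_v=1$ for all $v\in S$ and $X_v=0$ for all $v\in\partial S$. $\mathbf X$ encodes an independent set iff there is no cluster. Algorithm $\mathrm{PRSforIS}_f(G,\lambda)$: fix a function $f$ assigning to each nonempty family $\mathcal N\subseteq\mathcal C$ an element $f(\mathcal N)\in\mathcal N$. Sample $\mathbf X$ from the product distribution. While $\mathbf X$ does not encode an independent set, let $\mathcal N$ be the set of current clusters, let $S=f(\mathcal N)$, and resample all $X_v$, $v\in\overline S$, independently as Bernoulli$(\lambda/(1+\lambda))$. *)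

From HB Require Import structures.
From mathcomp Require Import all_boot all_order all_algebra.
From mathcomp Require Import all_classical all_reals all_analysis.
Set Implicit Arguments. Unset Strict Implicit. Unset Printing Implicit Defensive.
Import Order.TTheory GRing.Theory Num.Theory.
Local Open Scope ring_scope.

Definition simple_graph (n : nat) (adj : rel 'I_n) : Prop :=
  (forall u, ~~ adj u u) /\ (forall u v, adj u v = adj v u).

Notation config n := {ffun 'I_n -> bool}.

Definition encoded n (x : config n) : {set 'I_n} := [set v | x v].

Definition is_indep n (adj : rel 'I_n) (x : config n) : bool :=
  [forall u, forall v, adj u v ==> ~~ (x u && x v)].

Definition bdry n (adj : rel 'I_n) (S : {set 'I_n}) : {set 'I_n} :=
  [set v | (v \notin S) && [exists u in S, adj u v]].
Definition clos n (adj : rel 'I_n) (S : {set 'I_n}) : {set 'I_n} :=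
  S :|: bdry adj S.

Definition induced_connected n (adj : rel 'I_n) (S : {set 'I_n}) : bool :=
  [forall u : 'I_n, forall v : 'I_n, (u \in S) && (v \in S) ==>
     connect [rel a b | [&& adj a b, a \in S & b \in S]] u v].

Definition Cfam n (adj : rel 'I_n) : {set {set 'I_n}} :=
  [set S : {set 'I_n} | (2 <= #|S|)%N && induced_connected adj S].

Definition is_cluster n (adj : rel 'I_n) (x : config n) (S : {set 'I_n}) : bool :=
  [&& S \in Cfam adj, [forall v in S, x v] & [forall v in bdry adj S, ~~ x v]].

Definition clusters n (adj : rel 'I_n) (x : config n) : {set {set 'I_n}} :=
  [set S : {set 'I_n} | is_cluster adj x S].

Section Chain.
Variable R : realType.

Definition prod_weight (lambda : R) n (T : {set 'I_n}) (y : config n) : R :=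
  \prod_(v in T) (if y v then lambda / (1 + lambda) else 1 - lambda / (1 + lambda)).

(* one step of PRSforIS_f: if X is independent the algorithm has stopped
   (modelled as an absorbing state); otherwise resample closure(f(clusters X)). *)
Definition prs_step (lambda : R) n (adj : rel 'I_n)
    (f : {set {set 'I_n}} -> {set 'I_n}) (x y : config n) : R :=
  if is_indep adj x then (if y == x then 1 else 0)
  else let T := clos adj (f (clusters adj x)) in
       (if [forall v in ~: T, y v == x v] then 1 else 0) * prod_weight lambda T y.

Fixpoint prs_law (lambda : R) n (adj : rel 'I_n)
    (f : {set {set 'I_n}} -> {set 'I_n}) (t : nat) (y : config n) : R :=
  match t with
  | 0 => prod_weight lambda [set: 'I_n] y
  | t'.+1 => \sum_(x : config n) prs_law lambda adj f t' x * prs_step lambda adj f x y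
  end.

Definition hc_Z (lambda : R) n (adj : rel 'I_n) : R :=
  \sum_(z : config n | is_indep adj z) lambda ^+ #|encoded z|.
End Chain.

(* The algorithm is a Markov chain on configurations {0,1}^n whose absorbing
   states are the independent sets.  A configuration is independent iff it has no
      cluster.  If y arises by resampling the closure of a cluster S of x,
      then x = plant S y, and the clusters of plant S y are S together with
      the pieces cut_clusters S of the clusters of y (clusters_plant).
   2. Absorbing chains on a finite state space.  If from every state the
      chain is absorbed within k steps with probability >= eps > 0, the mass
      outside the absorbing set decays geometrically to 0; if moreover the
      law restricted to the absorbing set stays proportional to a weight w,
      it converges there to w normalised.
   3. The algorithm.  Vacating the resampled region strictly decreases the
      number of occupied vertices, giving the uniform absorption bound.
      By part 1, the law at time t is the product law times a function of
      the set of clusters (prs_law_product); on independent sets this is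
      proportional to lambda ^+ #|I|, the hard-core weight. *)

From HB Require Import structures.
From mathcomp Require Import all_boot all_order all_algebra.
From mathcomp Require Import all_classical all_reals all_analysis.
From mathcomp Require Import ring.
Import Order.TTheory GRing.Theory Num.Theory.
Import numFieldNormedType.Exports.
Set Implicit Arguments. Unset Strict Implicit. Unset Printing Implicit Defensive.
Local Open Scope ring_scope.

Section Clusters.
Variables (n : nat) (adj : rel 'I_n).
Hypothesis graph_adj : simple_graph adj.

Lemma adj_sym u v : adj u v = adj v u.
Proof. by case: graph_adj. Qed.

Lemma adj_irr u : ~~ adj u u.
Proof. by case: graph_adj. Qed.

Definition induced_edge (D : {set 'I_n}) : simpl_rel 'I_n :=
  [rel a b | [&& adj a b, a \in D & b \in D]].

Definition occupied_edge (x : config n) : simpl_rel 'I_n :=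
  [rel a b | [&& adj a b, x a & x b]].

Lemma occupied_edge_sym (x : config n) : symmetric (occupied_edge x).
Proof. by move=> a b /=; rewrite adj_sym; case: (x a); case: (x b); rewrite ?andbT ?andbF. Qed.

Lemma induced_connectP D a b : induced_connected adj D -> a \in D -> b \in D ->
  connect (induced_edge D) a b.
Proof.
by move=> /forallP/(_ a)/forallP/(_ b)/implyP conn aD bD; apply: conn; rewrite aD bD.
Qed.

Lemma bdryP (S : {set 'I_n}) v :
  reflect (v \notin S /\ exists2 u, u \in S & adj u v) (v \in bdry adj S).
Proof.
rewrite inE; apply: (iffP andP) => [[vS /existsP[u /andP[uS uv]]]|[vS [u uS uv]]].
  by split=> //; exists u.
by split=> //; apply/existsP; exists u; rewrite uS.
Qed.

Lemma closE (S : {set 'I_n}) v : (v \in clos adj S) = (v \in S) || (v \in bdry adj S).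
Proof. by rewrite inE. Qed.

(* A connected occupied set D that meets a set C with unoccupied boundary
   lies inside C: it cannot cross the boundary of C. *)
Lemma occupied_connected_sub (x : config n) C D c :
  [forall v in bdry adj C, ~~ x v] -> induced_connected adj D ->
  [forall v in D, x v] -> c \in D -> c \in C -> D \subset C.
Proof.
move=> /forallP bC connD /forallP xD cD cC; apply/fintype.subsetP => d dD.
have occ v : v \in D -> x v by move=> vD; apply: (implyP (xD v)).
have free v : v \in bdry adj C -> ~~ x v by move=> vb; apply: (implyP (bC v)).
have closedC : fingraph.closed (induced_edge D) C.
  move=> a b /= /and3P[ab aD bD].
  case aC: (a \in C); case bC': (b \in C) => //.
  - have /free : b \in bdry adj C by apply/bdryP; split; [rewrite bC' | exists a].
    by rewrite occ.
  - have /free : a \in bdry adj C.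
      by apply/bdryP; split; [rewrite aC | exists b; rewrite // adj_sym].
    by rewrite occ.
by rewrite -(closed_connect closedC (induced_connectP connD cD dD)).
Qed.

Definition occ_comp (x : config n) u : {set 'I_n} := [set w | connect (occupied_edge x) u w].

Lemma occ_comp_self (x : config n) u : u \in occ_comp x u.
Proof. by rewrite inE connect0. Qed.

Lemma occ_comp_occupied (x : config n) u w : x u -> w \in occ_comp x u -> x w.
Proof.
move=> xu; rewrite inE => /connectP[p]; elim/last_ind: p => [|p z _] /=.
  by move=> _ ->.
by rewrite rcons_path last_rcons => /andP[_ /and3P[]] _ _ xz ->.
Qed.

(* The boundary of an occupied component is vacant: an occupied neighbour
   would belong to the component. *)
Lemma occ_comp_bdry (x : config n) u : x u -> [forall v in bdry adj (occ_comp x u), ~~ x v].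
Proof.
move=> xu; apply/forallP => v; apply/implyP => /bdryP[vC [w wC wv]].
apply/negP => xv; move: vC; rewrite inE => /negP; apply.
apply: connect_trans (_ : connect (occupied_edge x) w v); first by move: wC; rewrite inE.
by apply: connect1; rewrite /= wv xv (occ_comp_occupied xu wC).
Qed.

Lemma occ_comp_path (x : config n) u p a : a \in occ_comp x u -> path (occupied_edge x) a p ->
  connect (induced_edge (occ_comp x u)) a (last a p).
Proof.
elim: p a => [|z p IH] a aC /=; first by rewrite connect0.
case/andP => az pz.
have zC : z \in occ_comp x u.
  by move: aC; rewrite !inE => /connect_trans; apply; apply: connect1.
apply: connect_trans (IH z zC pz); apply: connect1.
by move: az => /= /and3P[-> _ _]; rewrite aC zC.
Qed.

Lemma occ_comp_connected (x : config n) u : induced_connected adj (occ_comp x u).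
Proof.
apply/forallP => a; apply/forallP => b; apply/implyP => /andP[aC bC].
have /connectP[p pp ->] : connect (occupied_edge x) a b.
  apply: connect_trans (_ : connect (occupied_edge x) u b); last by move: bC; rewrite inE.
  by rewrite (sym_connect_sym (occupied_edge_sym x)); move: aC; rewrite inE.
exact: occ_comp_path.
Qed.

Lemma sub_occ_comp (x : config n) D u : induced_connected adj D ->
  [forall v in D, x v] -> u \in D -> D \subset occ_comp x u.
Proof.
move=> connD /forallP xD uD; apply/fintype.subsetP => d dD; rewrite inE.
apply: connect_sub (induced_connectP connD uD dD) => a b /= /and3P[ab aD bD].
by apply: connect1; rewrite /= ab (implyP (xD a) aD) (implyP (xD b) bD).
Qed.

Lemma occ_comp_cluster (x : config n) u : x u -> (1 < #|occ_comp x u|)%N ->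
  is_cluster adj x (occ_comp x u).
Proof.
move=> xu big; apply/and3P; split.
- by rewrite inE big occ_comp_connected.
- by apply/forallP => w; apply/implyP; apply: occ_comp_occupied.
- exact: occ_comp_bdry.
Qed.

Lemma indep_clusters (x : config n) : is_indep adj x = (clusters adj x == finset.set0).
Proof.
apply/idP/idP.
- move=> /forallP indep; apply/eqP/setP => S; rewrite inE finset.in_set0; apply/negP.
  case/and3P; rewrite inE => /andP[/card_gt1P[a [b [aS bS ab]]] connS] /forallP xS _.
  case/connectP: (induced_connectP connS aS bS) => -[|z p] /=.
    by move=> _ E; rewrite E eqxx in ab.
  case/andP => /and3P[az _ zS] _ _.
  move/forallP: (indep a) => /(_ z) /implyP /(_ az).
  by rewrite (implyP (xS a) aS) (implyP (xS z) zS).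
- move=> /eqP none; apply/forallP => u; apply/forallP => v; apply/implyP => uv.
  apply/negP => /andP[xu xv].
  have big : (1 < #|occ_comp x u|)%N.
    apply/card_gt1P; exists u, v; split; first exact: occ_comp_self.
      by rewrite inE; apply: connect1; rewrite /= uv xu xv.
    by apply/eqP => E; move: uv; rewrite E (negbTE (adj_irr v)).
  have : occ_comp x u \in clusters adj x by rewrite inE occ_comp_cluster.
  by rewrite none finset.in_set0.
Qed.

Lemma clusters_sub (x : config n) : clusters adj x \subset Cfam adj.
Proof. by apply/fintype.subsetP => S; rewrite inE => /and3P[]. Qed.

(* When the closure of a
   cluster S is resampled into y, the previous configuration was plant S y. *)
Definition plant (S : {set 'I_n}) (y : config n) : config n :=
  [ffun v => if v \in S then true else if v \in bdry adj S then false else y v].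

(* The pieces into which clos S cuts the clusters in M: connected sets D
   avoiding clos S, contained in some C in M, whose boundary inside C lies
   in clos S. *)
Definition cut_clusters (S : {set 'I_n}) (M : {set {set 'I_n}}) : {set {set 'I_n}} :=
  [set D in Cfam adj | [disjoint D & clos adj S] &&
     [exists C in M, (D \subset C) &&
        [forall v in bdry adj D, (v \in C) ==> (v \in clos adj S)]]].

Lemma plant_outside (S : {set 'I_n}) (y : config n) v :
  v \notin clos adj S -> plant S y v = y v.
Proof. by rewrite closE ffunE => /norP[/negbTE -> /negbTE ->]. Qed.

Lemma plant_S (S : {set 'I_n}) (y : config n) v : v \in S -> plant S y v.
Proof. by rewrite ffunE => ->. Qed.

Lemma plant_bdry (S : {set 'I_n}) (y : config n) v : v \in bdry adj S -> ~~ plant S y v.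
Proof. by rewrite ffunE => vb; rewrite vb; case/bdryP: vb => /negbTE ->. Qed.

Lemma plant_cluster (S : {set 'I_n}) (y : config n) :
  S \in Cfam adj -> is_cluster adj (plant S y) S.
Proof.
move=> SC; apply/and3P; split=> //; apply/forallP => v; apply/implyP.
  exact: plant_S.
exact: plant_bdry.
Qed.

(* Any other cluster of plant S y is disjoint from clos S: it cannot meet
   the cluster S, and it avoids the vacated boundary of S. *)
Lemma plant_cluster_disjoint (S : {set 'I_n}) (y : config n) D : S \in Cfam adj ->
  is_cluster adj (plant S y) D -> D != S -> [disjoint D & clos adj S].
Proof.
move=> SC /and3P[DC xD bD] DS.
have connD : induced_connected adj D by move: DC; rewrite inE => /andP[].
have connS : induced_connected adj S by move: SC; rewrite inE => /andP[].
have /and3P[_ xS bS] := plant_cluster y SC.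
apply/pred0P => c /=; apply/negP => /andP[cD]; rewrite closE => /orP[cS|cb].
  move: DS; rewrite finset.eqEsubset.
  by rewrite (occupied_connected_sub bS connD xD cD cS)
             (occupied_connected_sub bD connS xS cS cD).
by move/forallP/(_ c)/implyP: xD => /(_ cD); apply/negP; apply: plant_bdry.
Qed.

(* Hence every other cluster of plant S y is a piece cut off by clos S from
   the occupied component of y containing it. *)
Lemma plant_cluster_cut (S : {set 'I_n}) (y : config n) D : S \in Cfam adj ->
  is_cluster adj (plant S y) D -> D != S -> D \in cut_clusters S (clusters adj y).
Proof.
move=> SC Dcl DS; have DT := plant_cluster_disjoint SC Dcl DS.
case/and3P: Dcl => DC /forallP xD /forallP bD.
have connD : induced_connected adj D by move: DC; rewrite inE => /andP[].
have yD v : v \in D -> y v.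
  by move=> vD; have := implyP (xD v) vD; rewrite plant_outside // (disjointFr DT vD).
have [d0 d0D] : exists d0, d0 \in D.
  by move: DC; rewrite inE => /andP[/card_gt1P[a [_ [aD _ _]]] _]; exists a.
have sub_comp : D \subset occ_comp y d0.
  by apply: sub_occ_comp => //; apply/forallP => v; apply/implyP => /yD.
rewrite inE DC DT /=; apply/existsP; exists (occ_comp y d0); apply/and3P; split=> //.
- rewrite inE occ_comp_cluster ?yD //.
  by apply: leq_trans (subset_leq_card sub_comp); move: DC; rewrite inE => /andP[].
- apply/forallP => v; apply/implyP => vb; apply/implyP => vC; apply/negPn/negP => vT.
  move: (implyP (bD v) vb); rewrite plant_outside //.
  by rewrite (occ_comp_occupied (yD d0 d0D) vC).
Qed.

(* Conversely, each piece cut off by clos S is a cluster of plant S y: it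
   stays occupied, and its boundary is vacant either because it lies in
   clos S or because it lies on the boundary of a cluster of y. *)
Lemma cut_plant_cluster (S : {set 'I_n}) (y : config n) D :
  D \in cut_clusters S (clusters adj y) -> is_cluster adj (plant S y) D.
Proof.
rewrite inE => /andP[DC /andP[DT /existsP[C /and3P[Ccl DsC bDC]]]].
move: Ccl; rewrite inE => /and3P[_ /forallP yC /forallP ybC].
have nT v : v \in D -> v \notin clos adj S by move=> vD; rewrite (disjointFr DT vD).
apply/and3P; split=> //.
  apply/forallP => v; apply/implyP => vD; rewrite plant_outside ?nT //.
  exact: (implyP (yC v) (fintype.subsetP DsC v vD)).
apply/forallP => v; apply/implyP => vbD; have [vnD [d dD dv]] := bdryP _ _ vbD.
have dC : d \in C := fintype.subsetP DsC d dD.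
have vS : v \notin S.
  apply: contra (nT d dD) => vS; rewrite closE; apply/orP; right.
  apply/bdryP; split; last by exists v; rewrite // adj_sym.
  by apply: contra (nT d dD) => dS; rewrite closE dS.
case vb: (v \in bdry adj S); first by apply: plant_bdry.
rewrite plant_outside ?closE ?(negbTE vS) ?vb //.
case vC: (v \in C).
  by move: (implyP (forallP bDC v) vbD); rewrite vC closE (negbTE vS) vb.
by apply: (implyP (ybC v)); apply/bdryP; split; [rewrite vC | exists d].
Qed.

Lemma clusters_plant (S : {set 'I_n}) (y : config n) : S \in Cfam adj ->
  clusters adj (plant S y) = S |: cut_clusters S (clusters adj y).
Proof.
move=> SC; apply/setP => D; rewrite in_setU1 [in LHS]inE.
have [->|DS] /= := eqVneq D S; first exact: plant_cluster.
apply/idP/idP => [Dcl|]; first exact: plant_cluster_cut.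
exact: cut_plant_cluster.
Qed.

End Clusters.

Local Open Scope classical_set_scope.
Local Open Scope ring_scope.

Section AbsorbingChain.
Variables (R : realType) (T : finType) (mu : T -> R) (K : T -> T -> R).
Hypothesis K_ge0 : forall x y, 0 <= K x y.
Hypothesis K_sum1 : forall x, \sum_y K x y = 1.
Hypothesis mu_ge0 : forall x, 0 <= mu x.
Hypothesis mu_sum1 : \sum_x mu x = 1.

Fixpoint chain_law (t : nat) (y : T) : R :=
  if t is t'.+1 then \sum_x chain_law t' x * K x y else mu y.

Fixpoint kpow (k : nat) (x y : T) : R :=
  if k is k'.+1 then \sum_z K x z * kpow k' z y else (y == x)%:R.

Lemma kpow_ge0 k x y : 0 <= kpow k x y.
Proof.
elim: k x => [|k IH] x /=; first exact: ler0n.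
by apply: sumr_ge0 => z _; apply: mulr_ge0.
Qed.

Lemma kpow_sum1 k x : \sum_y kpow k x y = 1.
Proof.
elim: k x => [|k IH] x /=.
  by rewrite (bigD1 x) //= eqxx big1 ?addr0 // => y /negbTE ->.
rewrite exchange_big /= -(K_sum1 x); apply: eq_bigr => z _.
by rewrite -mulr_sumr IH mulr1.
Qed.

Lemma chain_law_ge0 t y : 0 <= chain_law t y.
Proof.
elim: t y => [|t IH] y //=.
by apply: sumr_ge0 => x _; apply: mulr_ge0.
Qed.

Lemma chain_law_add t k y : chain_law (t + k) y = \sum_x chain_law t x * kpow k x y.
Proof.
elim: k t => [|k IH] t /=.
  rewrite addn0 (bigD1 y) //= eqxx mulr1 big1 ?addr0 //.
  by move=> x xy; rewrite eq_sym (negbTE xy) mulr0.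
rewrite addnS -addSn IH /=.
under eq_bigr do rewrite mulr_suml.
rewrite exchange_big /=; apply: eq_bigr => w _.
by rewrite mulr_sumr; apply: eq_bigr => x _; rewrite mulrA.
Qed.

Lemma chain_law_sum1 t : \sum_y chain_law t y = 1.
Proof.
rewrite (eq_bigr (fun y => \sum_x mu x * kpow t x y)); last first.
  by move=> y _; rewrite -[t]add0n chain_law_add.
rewrite exchange_big /= -mu_sum1; apply: eq_bigr => x _.
by rewrite -mulr_sumr kpow_sum1 mulr1.
Qed.

Variable A : pred T.
Hypothesis K_absorb : forall x y, A x -> K x y = (y == x)%:R.

Lemma kpow_absorb k x y : A x -> kpow k x y = (y == x)%:R.
Proof.
move=> Ax; elim: k => [|k IH] //=.
rewrite (bigD1 x) //= big1 ?addr0; first by rewrite IH K_absorb // eqxx mul1r.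
by move=> z zx; rewrite K_absorb // (negbTE zx) mul0r.
Qed.

Definition hit (k : nat) (x : T) : R := \sum_(y | A y) kpow k x y.

Lemma hit_absorbed k x : A x -> hit k x = 1.
Proof.
move=> Ax; rewrite /hit (bigD1 x) //= kpow_absorb // eqxx big1 ?addr0 //.
by move=> y /andP[_ yx]; rewrite kpow_absorb // (negbTE yx).
Qed.

Lemma hit_ge0 k x : 0 <= hit k x.
Proof. by apply: sumr_ge0 => y _; apply: kpow_ge0. Qed.

Lemma hit_succ k x : hit k.+1 x = \sum_z K x z * hit k z.
Proof.
rewrite /hit /=; under eq_bigr do rewrite /=.
rewrite exchange_big /=; apply: eq_bigr => z _; by rewrite mulr_sumr.
Qed.

Lemma hit_descent (h : T -> nat) (d : R) : 0 <= d -> d <= 1 ->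
  (forall x, ~~ A x -> exists2 x', (h x' < h x)%N & d <= K x x') ->
  forall k x, (h x <= k)%N -> d ^+ k <= hit k x.
Proof.
move=> d0 d1 descent; elim=> [|k IH] x hx.
  have [Ax|nAx] := boolP (A x); first by rewrite hit_absorbed.
  by have [x' + _] := descent x nAx; rewrite ltnNge (leq_trans hx).
have [Ax|nAx] := boolP (A x); first by rewrite hit_absorbed // exprn_ile1.
have [x' hx' dK] := descent x nAx.
rewrite hit_succ (bigD1 x') //= exprS.
apply: ler_wpDr; first by apply: sumr_ge0 => z _; apply: mulr_ge0 => //; apply: hit_ge0.
apply: ler_pM => //; first exact: exprn_ge0.
by apply: IH; rewrite -ltnS (leq_trans hx').
Qed.

Definition escape (t : nat) : R := \sum_(x | ~~ A x) chain_law t x.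

Lemma escape_add t k : escape (t + k) = \sum_(x | ~~ A x) chain_law t x * (1 - hit k x).
Proof.
rewrite /escape; under eq_bigr do rewrite chain_law_add.
rewrite exchange_big /= (bigID A) /= big1 ?add0r; last first.
  move=> x Ax; rewrite -mulr_sumr big1 ?mulr0 // => y nAy.
  by rewrite kpow_absorb //; case: eqP nAy => // ->; rewrite Ax.
apply: eq_bigr => x _; rewrite -mulr_sumr; congr (_ * _).
by rewrite -(kpow_sum1 k x) [\sum_y _](bigID A) /= /hit addrC addrK.
Qed.

Lemma escape_ge0 t : 0 <= escape t.
Proof. by apply: sumr_ge0 => x _; apply: chain_law_ge0. Qed.

Lemma escape_le1 t : escape t <= 1.
Proof.
rewrite -(chain_law_sum1 t) [X in _ <= X](bigID (fun x => ~~ A x)) /= lerDl.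
by apply: sumr_ge0 => x _; apply: chain_law_ge0.
Qed.

Lemma escape_nonincr s t : (s <= t)%N -> escape t <= escape s.
Proof.
move=> st; rewrite -(subnKC st) escape_add; apply: ler_sum => x _.
rewrite -[X in _ <= X]mulr1; apply: ler_wpM2l; first exact: chain_law_ge0.
by rewrite lerBlDr lerDl hit_ge0.
Qed.

Lemma absorbed_mass t : \sum_(J | A J) chain_law t J = 1 - escape t.
Proof. by rewrite -(chain_law_sum1 t) [\sum_y _](bigID A) /= /escape addrK. Qed.

Lemma absorbed_law_proportional t (w : T -> R) c :
  \sum_(J | A J) w J != 0 -> (forall J, A J -> chain_law t J = c * w J) ->
  forall I, A I -> chain_law t I = w I / (\sum_(J | A J) w J) * (1 - escape t).
Proof.
move=> w_neq0 prop I AI.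
have -> : 1 - escape t = c * \sum_(J | A J) w J.
  by rewrite -absorbed_mass mulr_sumr; apply: eq_bigr => J /prop.
by rewrite prop // mulrA mulrAC divfK // mulrC.
Qed.

Section UniformAbsorption.
Variables (k : nat) (eps : R).
Hypotheses (eps_gt0 : 0 < eps) (eps_le1 : eps <= 1).
Hypothesis hit_lb : forall x, ~~ A x -> eps <= hit k x.

Lemma escape_contract t : escape (t + k) <= (1 - eps) * escape t.
Proof.
rewrite escape_add /escape mulr_sumr; apply: ler_sum => x nAx; rewrite mulrC.
by apply: ler_wpM2r; [apply: chain_law_ge0 | rewrite lerB // hit_lb].
Qed.

Lemma escape_geom m : escape (m * k) <= (1 - eps) ^+ m.
Proof.
elim: m => [|m IH]; first by rewrite mul0n expr0 escape_le1.
rewrite mulSnr exprS; apply: le_trans (escape_contract _) _.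
by apply: ler_wpM2l; rewrite // subr_ge0.
Qed.

Lemma escape_cvg0 : escape t @[t --> \oo] --> 0.
Proof.
have rho_ge0 : 0 <= 1 - eps by rewrite subr_ge0.
have rho_lt1 : `|1 - eps| < 1 by rewrite ger0_norm // ltrBlDr ltrDl.
apply/cvgrPdist_lt => e e0.
have := cvg_expr rho_lt1; move/cvgrPdist_lt/(_ e e0) => [m _ small].
exists (m * k)%N => // t /= mkt.
rewrite sub0r normrN ger0_norm ?escape_ge0 //.
apply: le_lt_trans (escape_nonincr mkt) _; apply: le_lt_trans (escape_geom m) _.
by move: (small m (leqnn m)); rewrite sub0r normrN ger0_norm // exprn_ge0.
Qed.

Lemma absorbed_law_cvg (w : T -> R) : \sum_(J | A J) w J != 0 ->
  (forall t, exists c, forall J, A J -> chain_law t J = c * w J) ->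
  forall I, A I -> chain_law t I @[t --> \oo] --> w I / \sum_(J | A J) w J.
Proof.
move=> w_neq0 prop I AI.
have lawE : chain_law^~ I = fun t => w I / (\sum_(J | A J) w J) * (1 - escape t).
  by apply: funext => t; have [c cw] := prop t; exact: absorbed_law_proportional cw I AI.
set q := w I / _ in lawE *; rewrite lawE.
have : (fun t => q * (1 - escape t)) @ \oo --> q * (1 - 0).
  by apply: cvgM; [exact: cvg_cst | apply: cvgB; [exact: cvg_cst | exact: escape_cvg0]].
by rewrite subr0 mulr1.
Qed.

End UniformAbsorption.
End AbsorbingChain.

Section PartialRejectionSampling.
Variables (R : realType) (n : nat) (adj : rel 'I_n) (lambda : R)
  (f : {set {set 'I_n}} -> {set 'I_n}).
Hypotheses (graph_adj : simple_graph adj) (lambda_gt0 : 0 < lambda).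
Hypothesis f_choice :
  forall N : {set {set 'I_n}}, N \subset Cfam adj -> N != finset.set0 -> f N \in N.

Definition occ_prob : R := lambda / (1 + lambda).
Definition bern (b : bool) : R := if b then occ_prob else 1 - occ_prob.

Local Notation pw := (prod_weight lambda).
Local Notation step := (prs_step lambda adj f).

Lemma occ_prob_gt0 : 0 < occ_prob.
Proof. by rewrite divr_gt0 // addr_gt0. Qed.

Lemma occ_prob_lt1 : occ_prob < 1.
Proof. by rewrite ltr_pdivrMr ?addr_gt0 // mul1r ltrDr. Qed.

Lemma bern_gt0 b : 0 < bern b.
Proof. by case: b; rewrite /bern ?occ_prob_gt0 ?subr_gt0 ?occ_prob_lt1. Qed.

Lemma prod_weightE (T : {set 'I_n}) y : pw T y = \prod_(v in T) bern (y v).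
Proof. by []. Qed.

Lemma prod_weight_gt0 (T : {set 'I_n}) y : 0 < pw T y.
Proof. by rewrite prod_weightE; apply: prodr_gt0 => v _; apply: bern_gt0. Qed.

Lemma prod_weight_ge0 (T : {set 'I_n}) y : 0 <= pw T y.
Proof. exact/ltW/prod_weight_gt0. Qed.

Lemma prod_weight_split (T : {set 'I_n}) y : pw [set: 'I_n] y = pw T y * pw (~: T) y.
Proof. by rewrite !prod_weightE (big_setID T) /= finset.setTI finset.setTD. Qed.

Lemma prod_indicator (P b : pred 'I_n) :
  \prod_(v | P v) (if b v then 1 else 0 : R) = if [forall v, P v ==> b v] then 1 else 0.
Proof.
case: ifP => [/forallP Pb|/negbT/forallPn[v]].
  by rewrite big1 // => v /(implyP (Pb v)) ->.
by rewrite negb_imply => /andP[Pv /negbTE bv]; rewrite (bigD1 v) //= bv mul0r.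
Qed.

(* Resampling T independently while freezing the rest is a probability
   distribution: the product over vertices of the one-vertex laws. *)
Lemma resample_sum1 (T : {set 'I_n}) (x : config n) :
  \sum_(y : config n) (if [forall v in ~: T, y v == x v] then 1 else 0) * pw T y = 1.
Proof.
pose F v (b : bool) : R := if v \in T then bern b else if b == x v then 1 else 0.
have F_sum1 : \prod_(v : 'I_n) \sum_(b : bool) F v b = 1.
  rewrite big1 // => v _; rewrite big_bool /F; case: (v \in T).
    by rewrite /= /bern addrCA subrr addr0.
  by case: (x v); rewrite /= ?addr0 ?add0r.
rewrite -[RHS]F_sum1 bigA_distr_bigA; apply: eq_bigr => y _.
rewrite (bigID (mem T)) /= mulrC; congr (_ * _).
  by rewrite prod_weightE; apply: eq_bigr => v vT; rewrite /F vT.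
rewrite (eq_bigr (fun v => if y v == x v then 1 else 0)); last first.
  by move=> v /negbTE vT; rewrite /F vT.
by rewrite prod_indicator; congr (if _ then _ else _); apply: eq_forallb => v; rewrite inE.
Qed.

Lemma prod_weight_sum1 : \sum_y pw [set: 'I_n] y = 1.
Proof.
rewrite -(resample_sum1 [set: 'I_n] [ffun=> true]); apply: eq_bigr => y _.
suff -> : [forall v in ~: [set: 'I_n], y v == [ffun=> true] v] by rewrite mul1r.
by apply/forallP => v; rewrite !inE.
Qed.

Lemma prs_step_ge0 x y : 0 <= step x y.
Proof.
rewrite /prs_step; case: ifP => _; first by case: ifP.
by apply: mulr_ge0; [case: ifP | apply/ltW/prod_weight_gt0].
Qed.

Lemma prs_step_sum1 x : \sum_y step x y = 1.
Proof.
rewrite /prs_step; case: (is_indep adj x); last exact: resample_sum1.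
by rewrite (bigD1 x) //= eqxx big1 ?addr0 // => y /negbTE ->.
Qed.

Lemma prs_step_absorb x y : is_indep adj x -> step x y = (y == x)%:R.
Proof. by rewrite /prs_step => ->; case: eqP. Qed.

Lemma prs_lawE t y : prs_law lambda adj f t y = chain_law (pw [set: 'I_n]) step t y.
Proof. by elim: t y => [|t IH] y //=; apply: eq_bigr => x _; rewrite IH. Qed.

Lemma chosen_cluster x : ~~ is_indep adj x -> f (clusters adj x) \in clusters adj x.
Proof. by rewrite indep_clusters // => x_cl; apply: f_choice; rewrite ?clusters_sub. Qed.

(* Vacating the resampled region is one step of probability at least
   (1 - occ_prob) ^+ n, and strictly decreases the number of occupied
   vertices since the chosen cluster is nonempty and occupied. *)
Lemma prs_descent x : ~~ is_indep adj x ->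
  exists2 x', (#|encoded x'| < #|encoded x|)%N & (1 - occ_prob) ^+ n <= step x x'.
Proof.
move=> x_dep; have S_cl := chosen_cluster x_dep.
set T := clos adj (f (clusters adj x)).
exists [ffun v => x v && (v \notin T)].
  apply: proper_card; apply/properP; split.
    by apply/fintype.subsetP => v; rewrite !inE ffunE => /andP[].
  move: S_cl; rewrite inE => /and3P[]; rewrite inE => /andP[/card_gt1P[s [_ [sS _ _]]] _].
  move=> /forallP xS _; exists s; first by rewrite inE (implyP (xS s) sS).
  by rewrite inE ffunE closE sS andbF.
rewrite /prs_step (negbTE x_dep) -/T.
have -> : [forall v in ~: T, [ffun v => x v && (v \notin T)] v == x v].
  by apply/forallP => v; apply/implyP; rewrite inE ffunE => ->; rewrite andbT.
rewrite mul1r prod_weightE (eq_bigr (fun=> 1 - occ_prob)); last first.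
  by move=> v vT; rewrite ffunE vT andbF.
rewrite prodr_const; apply: ler_wiXn2l; last by rewrite -[X in (_ <= X)%N]card_ord max_card.
  by rewrite subr_ge0 ltW // occ_prob_lt1.
by rewrite gerBl ltW // occ_prob_gt0.
Qed.

(* Weight of the values forced on clos S when S is the resampled cluster:
   S occupied and its boundary vacant. *)
Definition forced_weight (S : {set 'I_n}) : R := \prod_(v in clos adj S) bern (v \in S).

Lemma prod_weight_plant (S : {set 'I_n}) y :
  pw (clos adj S) (plant adj S y) = forced_weight S.
Proof.
rewrite prod_weightE; apply: eq_bigr => v; rewrite closE => /orP[vS|vb].
  by rewrite plant_S ?vS.
by rewrite (negbTE (plant_bdry y vb)); case/bdryP: vb => /negbTE ->.
Qed.

(* A dependent configuration x stepping to y is recovered from y and its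
   chosen cluster S: S is occupied, its boundary vacant, and x agrees with y
   outside clos S. *)
Lemma prs_step_predecessor x y : ~~ is_indep adj x -> step x y != 0 ->
  x = plant adj (f (clusters adj x)) y.
Proof.
move=> x_dep; rewrite /prs_step (negbTE x_dep).
case: ifP => [/forallP frozen _|]; last by rewrite mul0r eqxx.
have := chosen_cluster x_dep; set S := f _; rewrite inE => /and3P[_ /forallP xS /forallP xb].
apply/ffunP => v; rewrite ffunE.
case vS: (v \in S); first exact: (implyP (xS v) vS).
case vb: (v \in bdry adj S); first exact/negbTE/(implyP (xb v) vb).
by apply/esym/eqP; apply: (implyP (frozen v)); rewrite inE closE vS vb.
Qed.

(* Mass attached to a cluster set M at time t: the law of the algorithm is
   the product law reweighted by cluster_mass t of the cluster set.  A
   configuration with cluster set M is reached either from an absorbed state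
   (M empty) or from a dependent state with cluster set
   N = f N |: cut_clusters (f N) M, which carries the forced weight of f N. *)
Fixpoint cluster_mass (t : nat) (M : {set {set 'I_n}}) : R :=
  if t is t'.+1 then
    (if M == finset.set0 then cluster_mass t' finset.set0 else 0) +
    \sum_(N : {set {set 'I_n}} | (N \subset Cfam adj) && (N != finset.set0))
       cluster_mass t' N * forced_weight (f N) *
       (if f N |: cut_clusters adj (f N) M == N then 1 else 0)
  else 1.

(* One step of the product form: the dependent states with cluster set N
   contribute to y only through the predecessor plant (f N) y. *)
Lemma cluster_mass_step t y (N : {set {set 'I_n}}) :
  (N \subset Cfam adj) && (N != finset.set0) ->
  \sum_(x | ~~ is_indep adj x && (clusters adj x == N))
     pw [set: 'I_n] x * cluster_mass t (clusters adj x) * step x y =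
  pw [set: 'I_n] y * (cluster_mass t N * forced_weight (f N) *
     (if f N |: cut_clusters adj (f N) (clusters adj y) == N then 1 else 0)).
Proof.
case/andP => NC N0; set S := f N; have SN : S \in N by apply: f_choice.
have SC : S \in Cfam adj := fintype.subsetP NC S SN.
set T := clos adj S; set z := plant adj S y.
rewrite big_mkcond (bigD1 z) //= big1 ?addr0; last first.
  move=> x xz; case: ifP => // /andP[x_dep /eqP clx].
  case: (eqVneq (step x y) 0) => [->|/(prs_step_predecessor x_dep)]; first by rewrite mulr0.
  by rewrite clx -/S -/z => xz'; rewrite xz' eqxx in xz.
rewrite clusters_plant //; case: eqP => [clz|_]; last by rewrite andbF !mulr0.
have z_dep : ~~ is_indep adj z by rewrite indep_clusters // clusters_plant // clz.
rewrite z_dep /= clz /prs_step (negbTE z_dep) clusters_plant // clz -/S -/T.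
have -> : [forall v in ~: T, y v == z v].
  by apply/forallP => v; apply/implyP; rewrite inE => vT; rewrite plant_outside.
have outside : pw (~: T) z = pw (~: T) y.
  by rewrite !prod_weightE; apply: eq_bigr => v; rewrite inE => vT; rewrite plant_outside.
rewrite (prod_weight_split T z) (prod_weight_split T y) outside prod_weight_plant.
by rewrite -/S /=; ring.
Qed.

Lemma prs_law_product t x :
  chain_law (pw [set: 'I_n]) step t x = pw [set: 'I_n] x * cluster_mass t (clusters adj x).
Proof.
elim: t x => [|t IH] y /=; first by rewrite mulr1.
under eq_bigr do rewrite IH.
rewrite (bigID (is_indep adj)) /= mulrDr; congr (_ + _).
  case: (boolP (is_indep adj y)) => [y_ind|y_dep].
    rewrite (bigD1 y) //= big1 ?addr0.
      rewrite prs_step_absorb // eqxx mulr1.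
      by move: y_ind; rewrite indep_clusters // => /eqP ->; rewrite eqxx.
    by move=> x /andP[x_ind xy]; rewrite prs_step_absorb // eq_sym (negbTE xy) mulr0.
  move: (y_dep); rewrite indep_clusters // => /negbTE ->.
  rewrite mulr0 big1 // => x x_ind; rewrite prs_step_absorb //.
  by case: eqP => [yx|]; [move: y_dep; rewrite yx x_ind | rewrite mulr0].
rewrite (partition_big (clusters adj)
   (fun N => (N \subset Cfam adj) && (N != finset.set0))) /=; last first.
  by move=> x x_dep; rewrite clusters_sub -indep_clusters.
by rewrite mulr_sumr; apply: eq_bigr => N QN; apply: cluster_mass_step.
Qed.

(* From any state, absorption within n steps has probability at least
   absorb_bound, by n descents of probability (1 - occ_prob) ^+ n each. *)
Definition absorb_bound : R := ((1 - occ_prob) ^+ n) ^+ n.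

Lemma absorb_bound_gt0 : 0 < absorb_bound.
Proof. by rewrite !exprn_gt0 // subr_gt0 occ_prob_lt1. Qed.

Lemma absorb_bound_le1 : absorb_bound <= 1.
Proof.
by rewrite !exprn_ile1 ?exprn_ge0 // ?subr_ge0 ?gerBl ltW ?occ_prob_lt1 ?occ_prob_gt0.
Qed.

Lemma prs_absorption x : absorb_bound <= hit step (is_indep adj) n x.
Proof.
have d_ge0 : 0 <= (1 - occ_prob) ^+ n by rewrite exprn_ge0 // subr_ge0 ltW ?occ_prob_lt1.
have d_le1 : (1 - occ_prob) ^+ n <= 1.
  by rewrite exprn_ile1 // ?subr_ge0 ?gerBl ltW ?occ_prob_lt1 ?occ_prob_gt0.
apply: (hit_descent prs_step_ge0 prs_step_absorb (h := fun x => #|encoded x|)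
  d_ge0 d_le1 prs_descent).
by rewrite -[X in (_ <= X)%N](card_ord n) max_card.
Qed.

Lemma prs_terminates :
  (fun t => \sum_(x : config n | ~~ is_indep adj x) prs_law lambda adj f t x)
    @ \oo --> (0 : R).
Proof.
under eq_fun do under eq_bigr do rewrite prs_lawE.
apply: (escape_cvg0 prs_step_ge0 prs_step_sum1 (prod_weight_ge0 [set: 'I_n])
  prod_weight_sum1 prs_step_absorb absorb_bound_gt0 absorb_bound_le1).
by move=> x _; apply: prs_absorption.
Qed.

Lemma prod_weight_gibbs J :
  pw [set: 'I_n] J = lambda ^+ #|encoded J| * (1 + lambda)^-1 ^+ n.
Proof.
have l1 : 1 + lambda != 0 by rewrite gt_eqF // addr_gt0.
rewrite prod_weightE (eq_bigr (fun v => (if J v then lambda else 1) / (1 + lambda))).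
  rewrite big_split /= prodr_const cardsT card_ord -big_mkcondr /= -prodr_const.
  by congr (_ * _); apply: eq_bigl => v; rewrite !inE.
by move=> v _; rewrite /bern /occ_prob; case: (J v) => //; field.
Qed.

Lemma prs_gibbs I : is_indep adj I ->
  (fun t => prs_law lambda adj f t I) @ \oo --> lambda ^+ #|encoded I| / hc_Z lambda adj.
Proof.
move=> I_ind; set c : R := (1 + lambda)^-1 ^+ n.
have c_neq0 : c != 0 by rewrite expf_neq0 // invr_eq0 gt_eqF // addr_gt0.
have weight_sum : \sum_(J | is_indep adj J) pw [set: 'I_n] J = hc_Z lambda adj * c.
  by rewrite /hc_Z mulr_suml; apply: eq_bigr => J _; rewrite prod_weight_gibbs.
have empty_ind : is_indep adj [ffun=> false].
  by apply/forallP => u; apply/forallP => v; rewrite !ffunE implybT.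
have weight_neq0 : \sum_(J | is_indep adj J) pw [set: 'I_n] J != 0.
  rewrite gt_eqF // (bigD1 _ empty_ind) /= ltr_pwDl ?prod_weight_gt0 //.
  by apply: sumr_ge0 => J _; apply: prod_weight_ge0.
have proportional t : exists c', forall J, is_indep adj J ->
    chain_law (pw [set: 'I_n]) step t J = c' * pw [set: 'I_n] J.
  exists (cluster_mass t finset.set0) => J J_ind.
  by rewrite prs_law_product mulrC; move: J_ind; rewrite indep_clusters // => /eqP ->.
under eq_fun do rewrite prs_lawE.
have := absorbed_law_cvg prs_step_ge0 prs_step_sum1 (prod_weight_ge0 [set: 'I_n])
  prod_weight_sum1 prs_step_absorb absorb_bound_gt0 absorb_bound_le1
  (fun x _ => prs_absorption x) weight_neq0 proportional I_ind.
by rewrite weight_sum prod_weight_gibbs invfM mulrACA divff // mulr1.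
Qed.

End PartialRejectionSampling.

Theorem lemma6 (R : realType) (n : nat) (adj : rel 'I_n) (lambda : R)
  (f : {set {set 'I_n}} -> {set 'I_n}) :
  simple_graph adj -> 0 < lambda ->
  (forall N : {set {set 'I_n}}, N \subset Cfam adj -> N != finset.set0 -> f N \in N) ->
  (* termination with probability 1 *)
  ((fun t => \sum_(x : config n | ~~ is_indep adj x) prs_law lambda adj f t x)
     @ \oo --> (0 : R))
  /\
  (* output distribution is the hard-core Gibbs distribution *)
  (forall I : config n, is_indep adj I ->
     (fun t => prs_law lambda adj f t I) @ \oo
       --> lambda ^+ #|encoded I| / hc_Z lambda adj).
Proof.
move=> graph_adj lambda_gt0 f_choice.
split; [exact: prs_terminates | exact: prs_gibbs].
Qed.
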